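(* Let $f:X\to X$ be a piecewise contracting map on a compact, locally connected metric space $(X,d)$, with discontinuity set $\Delta$ and attractor $\Lambda$. If $\Delta=\emptyset$ or $d(\Lambda,\Delta)\neq0$, then $\Lambda$ is a finite union of periodic orbits of $f$.
   Context: A map $f:X\to X$ on a compact, locally connected metric space $(X,d)$ is piecewise contracting if there are $N\ge2$ non-empty, pairwise disjoint open sets $X_1,\dots,X_N$ with $X=\bigcup_i\overline{X_i}$, a constant $\lambda\in(0,1)$ with $d(f(x),f(y))\le\lambda d(x,y)$ for all $x,y$ in the same $X_i$, and such that $\tilde X:=\bigcap_{n\ge0}f^{-n}(X\setminus\Delta)\neq\emptyset$, where $\Delta:=X\setminus\bigcup_iX_i$ ($f$ is arbitrary on $\Delta$). For $A\subset X$ let $F_i(A):=\overline{f(A\cap X_i)}$; an atom of generation $n\ge1$ is a set $F_{i_n}\circ\cdots\circ F_{i_1}(X)$ with $i_1,\dots,i_n\in\{1,\dots,N\}$; $\Lambda_n$ is the union of all atoms of generation $n$ and the attractor is $\Lambda:=\bigcap_{n\ge1}\Lambda_n$. *)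

From HB Require Import structures.
From mathcomp Require Import all_boot all_order all_algebra.
From mathcomp Require Import all_classical all_reals all_analysis.
Set Implicit Arguments. Unset Strict Implicit. Unset Printing Implicit Defensive.
Import Order.TTheory GRing.Theory Num.Theory.
Local Open Scope classical_set_scope.
Local Open Scope ring_scope.

Definition locally_connected (T : topologicalType) :=
  forall (x : T) (U : set T), nbhs x U ->
    exists V : set T, [/\ open V, connected V, V x & V `<=` U].

Section PC.
Context {R : realType} {X : metricType R} (N : nat)
  (Xi : 'I_N -> set X) (f : X -> X).

Definition Delta : set X := ~` (\bigcup_(i in [set: 'I_N]) Xi i).

Definition Xtilde : set X := [set x | forall n : nat, ~ Delta (iter n f x)].

Definition Fmap (i : 'I_N) (A : set X) : set X := closure (f @` (A `&` Xi i)).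

(* atom F_{i_n} o ... o F_{i_1} (X) for s = [:: i_1; ...; i_n] *)
Definition atom (s : seq 'I_N) : set X := foldl (fun A i => Fmap i A) setT s.

Definition Lambda_n (n : nat) : set X :=
  \bigcup_(s in [set s : seq 'I_N | size s = n]) atom s.

Definition attractor : set X := \bigcap_(n in [set n : nat | (0 < n)%N]) Lambda_n n.

End PC.

Definition piecewise_contracting {R : realType} {X : metricType R} (N : nat)
  (Xi : 'I_N -> set X) (f : X -> X) (lambda : R) : Prop :=
  (2 <= N)%N /\
  (forall i, Xi i !=set0) /\
  (forall i, open (Xi i)) /\
  (forall i j, i != j -> Xi i `&` Xi j = set0) /\
  \bigcup_(i in [set: 'I_N]) closure (Xi i) = [set: X] /\
  (0 < lambda < 1) /\
  (forall i x y, Xi i x -> Xi i y -> mdist (f x) (f y) <= lambda * mdist x y) /\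
  Xtilde Xi f !=set0.

Definition set_dist {R : realType} {X : metricType R} (A B : set X) : R :=
  inf [set mdist x y | x in A & y in B].

Definition periodic_pt {X : Type} (f : X -> X) (p : X) : Prop :=
  exists k : nat, (0 < k)%N /\ iter k f p = p.

Definition fwd_orbit {X : Type} (f : X -> X) (p : X) : set X :=
  [set iter j f p | j in [set: nat]].

From HB Require Import structures.
From mathcomp Require Import all_boot all_order all_algebra.
From mathcomp Require Import all_classical all_reals all_analysis.
Import Order.TTheory GRing.Theory Num.Theory.
Local Open Scope classical_set_scope.
Local Open Scope ring_scope.

(* Since the attractor Lam stays away from the discontinuity set, it is
   covered by the open pieces; it is closed, f maps it onto itself, and by a
   Lebesgue number argument f contracts by lam on pairs of points of Lam at
   distance below some del.  If Lam contained more points than a del/2-net of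
   X, choose K with lam^K del smaller than their mutual distances: two of
   their K-th preimages in Lam lie within del of each other, so their images
   are closer than lam^K del, a contradiction.  Hence Lam is finite, and a map
   of a finite set onto itself makes every point periodic. *)

Lemma exists_natSinv_lt {R : realType} {e : R} : 0 < e ->
  exists n0, forall n, (n0 <= n)%N -> n.+1%:R^-1 < e.
Proof. by move=> e0; have [n0 _ Hn0] := near_infty_natSinv_lt (PosNum e0); exists n0. Qed.

Lemma geometric_eventually_lt {R : realType} (I : finType) (P : pred I)
    (g : I -> R) (lam c : R) :
  0 <= lam -> lam < 1 -> 0 < c -> (forall i, P i -> 0 < g i) ->
  exists K, forall i, P i -> lam ^+ K * c < g i.
Proof.
move=> lam_ge0 lam_lt1 c_gt0 g_gt0.
have : \forall K \near \oo, forall i, P i -> lam ^+ K * c < g i.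
  apply: filter_forall => i; have [Pi|_] := boolP (P i); last first.
    by apply: nearW.
  have /cvg_expr/cvgr0Pnorm_lt/(_ (g i / c)) : `|lam| < 1 by rewrite ger0_norm.
  rewrite divr_gt0 ?g_gt0 // => /(_ isT); apply: filterS => K lt_K _.
  by rewrite -ltr_pdivlMr //; apply: le_lt_trans lt_K; exact: ler_norm.
by case=> K _ HK; exists K; exact: HK K (leqnn K).
Qed.

Lemma bounded_uniq_enum {T : eqType} {P : T -> Prop} :
  (exists M, forall t : seq T, uniq t -> (forall x, x \in t -> P x) -> (size t <= M)%N) ->
  exists s : seq T, forall x, P x <-> x \in s.
Proof.
move=> [M bounded].
pose Q n := `[< exists t : seq T, [/\ uniq t, forall x, x \in t -> P x & size t = n] >].
have Q0 : exists n, Q n by exists 0%N; apply/asboolP; exists [::].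
have QM n : Q n -> (n <= M)%N by move=> /asboolP [t [ut tP <-]]; exact: bounded.
case: (ex_maxnP Q0 QM) => n /asboolP [s [us sP sn]] s_max.
exists s => x; split=> [Px|]; last exact: sP.
apply: contrapT => /negP xs; have /s_max : Q n.+1; last by rewrite ltnn.
apply/asboolP; exists (x :: s); split => /=; first by rewrite xs.
  by move=> y; rewrite inE => /orP [/eqP ->|/sP].
by rewrite sn.
Qed.

Lemma surj_on_seq_periodic (T : eqType) (f : T -> T) (s : seq T) :
  (forall y, y \in s -> exists2 z, z \in s & f z = y) ->
  forall x, x \in s -> periodic_pt f x.
Proof.
move=> f_onto x xs.
(* A backward orbit of x inside s repeats, and x lies on the resulting cycle. *)
have /choice [g g_pre] : forall y, exists z, y \in s -> z \in s /\ f z = y.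
  move=> y; have [ys|_] := boolP (y \in s); last by exists y.
  by have [z zs fz] := f_onto y ys; exists z.
pose y n := iter n g x.
have ys n : y n \in s by elim: n => //= n IH; case: (g_pre _ IH).
have iter_back k n : iter k f (y (n + k)%N) = y n.
  elim: k n => [|k IH] n; first by rewrite addn0.
  by rewrite iterSr addnS; case: (g_pre _ (ys (n + k)%N)) => _ ->; exact: IH.
have /(uniqPn x) [i [j [ij jL yij]]] : ~~ uniq [seq y k | k <- iota 0 (size s).+1].
  apply/negP => /uniq_leq_size le_s.
  have : {subset [seq y k | k <- iota 0 (size s).+1] <= s} by move=> _ /mapP [k _ ->].
  by move/le_s; rewrite size_map size_iota ltnn.
move: jL yij; rewrite size_map size_iota => jL.
rewrite !(nth_map 0%N) ?size_iota ?(ltn_trans ij) // !nth_iota ?(ltn_trans ij) //.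
rewrite !add0n => yij.
exists (j - i)%N; split; first by rewrite subn_gt0.
have back_j : iter (j - i) f (y j) = y i.
  by rewrite -[j in y j](subnKC (ltnW ij)) iter_back.
have <- : iter i f (y i) = x by rewrite -[in LHS](add0n i) iter_back.
by rewrite -iterD addnC iterD {1}yij back_j.
Qed.

Section metric_compactness.
Context {R : realType} {X : metricType R}.
Implicit Types (A B : set X) (x y : X).

Lemma closure_mdistP A x :
  closure A x <-> forall e, 0 < e -> exists2 z, A z & mdist x z < e.
Proof.
split=> [cAx e e0|near_A B /nbhs_ballP [e e0 eB]].
  by have [z [Az]] := cAx _ (nbhsx_ballx x e e0); rewrite ballEmdist; exists z.
by have [z Az xz] := near_A e e0; exists z; split => //; apply: eB; rewrite ballEmdist.
Qed.

Lemma open_mdist_ball {A x} : open A -> A x ->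
  exists2 r, 0 < r & forall y, mdist x y < r -> A y.
Proof.
move=> oA Ax; have /nbhs_ballP [r r0 rA] := @open_nbhs_nbhs _ x A (conj oA Ax).
by exists r => // y xy; apply: rA; rewrite ballEmdist.
Qed.

Lemma set_dist_neq0_disjoint A B : set_dist A B != 0 -> A `&` B = set0.
Proof.
move=> /eqP dAB; apply/seteqP; split => // x [Ax Bx]; apply: dAB.
have lb0 : lbound [set mdist a b | a in A & b in B] 0.
  by move=> _ [a _ [b _ <-]]; exact: mdist_ge0.
have dxx : [set mdist a b | a in A & b in B] 0.
  by exists x => //; exists x => //; exact: mdistxx.
apply/eqP; rewrite eq_le (lb_le_inf _ lb0) ?andbT; last by exists 0.
exact: ge_inf (ex_intro _ 0 lb0) _ dxx.
Qed.

Hypothesis cX : compact [set: X].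

Lemma compact_seq_cluster (u : nat -> X) :
  exists p, forall r, 0 < r -> forall n0, exists2 n, (n0 <= n)%N & mdist p (u n) < r.
Proof.
have [p [_ clp]] := cX (u @ \oo) _ filterT.
exists p => r r0 n0.
have tail_n0 : (u @ \oo) [set z | exists2 n, (n0 <= n)%N & z = u n].
  by exists n0 => // n n0n; exists n.
have [_ [[n n0n ->]]] := clp _ (ball p r) tail_n0 (nbhsx_ballx p r r0).
by rewrite ballEmdist; exists n.
Qed.

Lemma compact_finite_net {e} : 0 < e ->
  exists cs : seq X, forall x, exists2 c, c \in cs & mdist c x < e.
Proof.
move=> e0; apply: contrapT => no_net.
have /choice [g g_far] : forall cs : seq X, exists x, forall c, c \in cs -> e <= mdist c x.
  move=> cs; apply: contrapT => all_near; apply: no_net; exists cs => x.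
  apply: contrapT => x_far; apply: all_near; exists x => c cs_c.
  by rewrite leNgt; apply/negP => cx; apply: x_far; exists c.
pose fix pts n := if n is n'.+1 then g (pts n') :: pts n' else [::].
pose u n := g (pts n).
have u_pts n m : (n < m)%N -> u n \in pts m.
  elim: m => // m IH; rewrite ltnS leq_eqVlt => /orP [/eqP ->|/IH]; rewrite /= inE.
    by rewrite eqxx.
  by move->; rewrite orbT.
have [p clp] := compact_seq_cluster u.
have e20 : 0 < e / 2 by rewrite divr_gt0.
have [n _ pn] := clp _ e20 0%N.
have [m nm pm] := clp _ e20 n.+1.
have := g_far _ _ (u_pts _ _ nm); rewrite leNgt => /negP; apply.
apply: le_lt_trans (metric_triangle _ p _) _.
by rewrite [X in _ < X](splitr e) ltrD // metric_sym.
Qed.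

Lemma lebesgue_number {I : Type} {U : I -> set X} {A} :
  closed A -> (forall i, open (U i)) -> (forall x, A x -> exists i, U i x) ->
  exists2 del, 0 < del & forall u v, A u -> mdist u v < del ->
    exists i, U i u /\ U i v.
Proof.
move=> cA oU AU; apply: contrapT => no_del.
have /choice [w w_bad] : forall n, exists w : X * X,
    [/\ A w.1, mdist w.1 w.2 < n.+1%:R^-1 & ~ exists i, U i w.1 /\ U i w.2].
  move=> n; apply: contrapT => no_w; apply: no_del.
  exists n.+1%:R^-1; first by rewrite invr_gt0 ltr0n.
  by move=> u v Au uv; apply: contrapT => no_i; apply: no_w; exists (u, v).
have [p clp] := compact_seq_cluster (fun n => (w n).1).
have Ap : A p.
  apply: cA; apply/closure_mdistP => e e0.
  by have [n _ pn] := clp e e0 0%N; exists (w n).1 => //; case: (w_bad n).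
have [k Ukp] := AU _ Ap.
have [r r0 rU] := open_mdist_ball (oU k) Ukp.
have r20 : 0 < r / 2 by rewrite divr_gt0.
have [n0 n0_lt] := exists_natSinv_lt r20.
have [n n0n pn] := clp _ r20 n0.
case: (w_bad n) => _ wn; apply; exists k; split; apply: rU.
  by apply: lt_trans pn _; rewrite ltr_pdivrMr // ltr_pMr // ltr1n.
apply: le_lt_trans (metric_triangle _ (w n).1 _) _.
by rewrite [X in _ < X](splitr r) ltrD //; apply: lt_trans wn _; exact: n0_lt.
Qed.

End metric_compactness.

Section atoms.
Context {R : realType} {X : metricType R} {N : nat} {Xi : 'I_N -> set X} {f : X -> X}.

Lemma Fmap_mono i A B : A `<=` B -> Fmap Xi f i A `<=` Fmap Xi f i B.
Proof.
move=> AB; apply: closureS => _ [x [Ax Xix] <-].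
by exists x => //; split => //; exact: AB.
Qed.

Lemma foldl_Fmap_mono s A B : A `<=` B ->
  foldl (fun A i => Fmap Xi f i A) A s `<=` foldl (fun A i => Fmap Xi f i A) B s.
Proof. by elim: s A B => //= i s IH A B AB; apply: IH; exact: Fmap_mono. Qed.

Lemma atom_cons i s : atom Xi f (i :: s) `<=` atom Xi f s.
Proof. by rewrite /atom /=; exact: foldl_Fmap_mono. Qed.

Lemma atom_rcons s i : atom Xi f (rcons s i) = Fmap Xi f i (atom Xi f s).
Proof. by rewrite /atom foldl_rcons. Qed.

Lemma atom_closed s : closed (atom Xi f s).
Proof.
case/lastP: s => [|s i]; first exact: closedT.
by rewrite atom_rcons; exact: closed_closure.
Qed.

Lemma Lambda_n0 : Lambda_n Xi f 0 = setT.
Proof. by apply/seteqP; split => // x _; exists [::]. Qed.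

Lemma Lambda_nS n : Lambda_n Xi f n.+1 `<=` Lambda_n Xi f n.
Proof.
move=> x [[|i s] //= [size_s] atom_x]; exists s => //.
exact: atom_cons atom_x.
Qed.

Lemma Lambda_n_antitone m n : (m <= n)%N -> Lambda_n Xi f n `<=` Lambda_n Xi f m.
Proof.
move=> mn; rewrite -(subnK mn); elim: (n - m)%N => // k IH.
by rewrite addSn; exact: subset_trans (@Lambda_nS _) IH.
Qed.

Lemma Lambda_n_closed n : closed (Lambda_n Xi f n).
Proof.
apply: closed_bigcup => [|s _]; last exact: atom_closed.
have -> : [set s : seq 'I_N | size s = n] = (fun t : n.-tuple 'I_N => tval t) @` setT.
  apply/seteqP; split => [s /= size_s|_ [t _ <-]]; last exact: size_tuple.
  by exists (@Tuple n _ s (introT eqP size_s)).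
exact/finite_image/finite_finset.
Qed.

Lemma attractor_closed : closed (attractor Xi f).
Proof. by apply: closed_bigI => n _; exact: Lambda_n_closed. Qed.

End atoms.

Section attractor_dynamics.
Context {R : realType} {X : metricType R} {N : nat} {Xi : 'I_N -> set X} {f : X -> X}.
Local Notation Lam := (attractor Xi f).

Hypothesis attractor_pieces : forall {x}, Lam x -> exists i, Xi i x.

Lemma attractor_f {x} : Lam x -> Lam (f x).
Proof.
move=> Lx; have [i Xix] := attractor_pieces Lx; case=> [//|m] _.
have [s size_s atom_x] : Lambda_n Xi f m x.
  by case: m => [|m]; [rewrite Lambda_n0 | exact: Lx].
exists (rcons s i); first by rewrite /= size_rcons size_s.
by rewrite atom_rcons; apply: subset_closure; exists x.
Qed.

Lemma attractor_iter k {x} : Lam x -> Lam (iter k f x).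
Proof. by move=> Lx; elim: k => //= k IH; exact: attractor_f. Qed.

Context {lam : R}.
Hypotheses (cX : compact [set: X]) (oXi : forall i, open (Xi i))
  (lam_ge0 : 0 <= lam) (lam_lt1 : lam < 1)
  (contr : forall {i x y}, Xi i x -> Xi i y -> mdist (f x) (f y) <= lam * mdist x y).

Lemma f_eq_of_cluster {k p x} : Xi k p ->
    (forall e, 0 < e -> exists y, mdist p y < e /\ mdist x (f y) < e) -> f p = x.
Proof.
move=> Xkp near_p; have [r r0 rXk] := open_mdist_ball (oXi k) Xkp.
apply/mdist_positivity/eqP; rewrite eq_le mdist_ge0 andbT.
apply/ler_addgt0Pl => e e0; rewrite addr0.
have min_gt0 : 0 < Num.min r (e / 2) by rewrite lt_min r0 divr_gt0.
have [y []] := near_p _ min_gt0; rewrite !lt_min => /andP [/rXk Xky py] /andP [_ xfy].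
have fpy : mdist (f p) (f y) <= e / 2.
  apply: le_trans (contr Xkp Xky) _; apply: le_trans (ltW py).
  by rewrite ler_piMl ?mdist_ge0 // ltW.
apply: le_trans (metric_triangle _ (f y) _) _.
by rewrite [leRHS](splitr e) lerD // metric_sym ltW.
Qed.

(* x is a limit of f (y n) with y n in Lambda_n; a cluster point of (y n)
   lies in Lam, and f maps it to x. *)
Lemma attractor_f_surj {x} : Lam x -> exists2 y, Lam y & f y = x.
Proof.
move=> Lx.
have /choice [y y_pre] : forall n, exists y,
    Lambda_n Xi f n y /\ mdist x (f y) < n.+1%:R^-1.
  move=> n; have [+ + ] := Lx n.+1 (ltn0Sn n); case/lastP => [//|s i].
  rewrite /= size_rcons atom_rcons => -[size_s] /closure_mdistP.
  move=> /(_ n.+1%:R^-1); rewrite invr_gt0 ltr0n => /(_ isT).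
  by case=> _ [z [atom_z _] <-] xz; exists z; split => //; exists s.
have [p clp] := compact_seq_cluster cX y.
have Lp : Lam p.
  move=> m _; apply: Lambda_n_closed; apply/closure_mdistP => e e0.
  have [n mn pn] := clp e e0 m; exists (y n) => //.
  have [Ln _] := y_pre n; exact: Lambda_n_antitone mn _ Ln.
exists p => //; have [k Xkp] := attractor_pieces Lp.
apply: (f_eq_of_cluster Xkp) => e e0.
have [n0 n0_lt] := exists_natSinv_lt e0.
have [n n0n pn] := clp e e0 n0; exists (y n); split => //.
by case: (y_pre n) => _ /lt_trans; apply; exact: n0_lt.
Qed.

Lemma attractor_iter_surj k {x} : Lam x -> exists2 y, Lam y & iter k f y = x.
Proof.
elim: k x => [|k IH] x Lx; first by exists x.
have [y Ly <-] := IH _ Lx; have [z Lz <-] := attractor_f_surj Ly.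
by exists z => //; rewrite iterSr.
Qed.

Lemma iter_contract {del} :
    (forall u v, Lam u -> mdist u v < del -> exists i, Xi i u /\ Xi i v) ->
  forall k u v, Lam u -> mdist u v < del ->
    mdist (iter k f u) (iter k f v) <= lam ^+ k * mdist u v.
Proof.
move=> del_pieces k u v Lu uv; elim: k => [|k IH]; first by rewrite expr0 mul1r.
have uv_k : mdist (iter k f u) (iter k f v) < del.
  apply: le_lt_trans IH (le_lt_trans _ uv).
  by rewrite ler_piMl ?mdist_ge0 // exprn_ile1 // ltW.
have [i [Xiu Xiv]] := del_pieces _ _ (attractor_iter k Lu) uv_k.
rewrite /= exprS -mulrA; apply: le_trans (contr Xiu Xiv) _.
by rewrite ler_wpM2l.
Qed.

Lemma attractor_uniq_size_bound : exists M, forall t : seq X,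
  uniq t -> (forall x, x \in t -> Lam x) -> (size t <= M)%N.
Proof.
have [del del0 del_pieces] :=
  lebesgue_number cX attractor_closed oXi (@attractor_pieces).
have del2_0 : 0 < del / 2 by rewrite divr_gt0.
have [cs net] := compact_finite_net cX del2_0.
exists (size cs) => t t_uniq tL; rewrite leqNgt; apply/negP => cs_lt_t.
have [x0 _] : exists x, x \in t.
  by case: t cs_lt_t {t_uniq tL} => // x t _; exists x; rewrite mem_head.
pose T (a : 'I_(size t)) := nth x0 t a.
have [K far] : exists K, forall q : 'I_(size t) * 'I_(size t), q.1 != q.2 ->
    lam ^+ K * del < mdist (T q.1) (T q.2).
  apply: geometric_eventually_lt => // -[a b] /= ab.
  by rewrite mdist_gt0 /T nth_uniq.
have /choice [G G_pre] : forall a : 'I_(size t), exists j : 'I_(size cs) * X,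
    [/\ Lam j.2, iter K f j.2 = T a & mdist (nth x0 cs j.1) j.2 < del / 2].
  move=> a; have [u Lu Ku] := attractor_iter_surj K (tL _ (mem_nth x0 (ltn_ord a))).
  have [c cs_c cu] := net u; have c_idx : (index c cs < size cs)%N by rewrite index_mem.
  by exists (Ordinal c_idx, u); split => //=; rewrite nth_index.
have /injectivePn [a [b ab Gab]] : ~~ injectiveb (fun a => (G a).1).
  apply/injectiveP => /leq_card; rewrite !card_ord => t_le_cs.
  by have := leq_trans cs_lt_t t_le_cs; rewrite ltnn.
case: (G_pre a) => La Ka ca; case: (G_pre b) => _ Kb cb.
have ab_close : mdist (G a).2 (G b).2 < del.
  apply: le_lt_trans (metric_triangle _ (nth x0 cs (G a).1) _) _.
  rewrite [ltRHS](splitr del) ltrD //; first by rewrite metric_sym.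
  by rewrite Gab.
have := iter_contract del_pieces K _ _ La ab_close; rewrite Ka Kb => contr_ab.
have shrunk := ler_wpM2l (exprn_ge0 K lam_ge0) (ltW ab_close).
by have := lt_le_trans (far (a, b) ab) (le_trans contr_ab shrunk); rewrite ltxx.
Qed.

End attractor_dynamics.

Lemma attractor_sub_pieces {R : realType} {X : metricType R} {N : nat}
    {Xi : 'I_N -> set X} {f : X -> X} :
  Delta Xi = set0 \/ set_dist (attractor Xi f) (Delta Xi) != 0 ->
  forall x, attractor Xi f x -> exists i, Xi i x.
Proof.
move=> hDelta x Lx; have : ~ Delta Xi x.
  case: hDelta => [-> //| /set_dist_neq0_disjoint disj Dx].
  by have : (attractor Xi f `&` Delta Xi) x by []; rewrite disj.
by rewrite /Delta => /contrapT [i _ Xix]; exists i.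
Qed.

Theorem theorem3 (R : realType) (X : metricType R) (N : nat)
  (Xi : 'I_N -> set X) (f : X -> X) (lambda : R) :
  compact [set: X] ->
  locally_connected X ->
  piecewise_contracting Xi f lambda ->
  (Delta Xi = set0 \/ set_dist (attractor Xi f) (Delta Xi) != 0) ->
  exists (m : nat) (p : 'I_m -> X),
    (forall k, periodic_pt f (p k)) /\
    attractor Xi f = \bigcup_(k in [set: 'I_m]) fwd_orbit f (p k).
Proof.
move=> cX _ [_ [_ [oXi [_ [_ [/andP [/ltW lam_ge0 lam_lt1] [contr _]]]]]]] hDelta.
have pieces := attractor_sub_pieces hDelta.
have [s Ls] := bounded_uniq_enum
  (attractor_uniq_size_bound pieces cX oXi lam_ge0 lam_lt1 contr).
have s_periodic : forall x, x \in s -> periodic_pt f x.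
  apply: surj_on_seq_periodic => y /Ls Ly.
  have [z Lz fz] := attractor_f_surj pieces cX oXi lam_lt1 contr Ly.
  by exists z => //; exact/Ls.
exists (size s), (tnth (in_tuple s)); split => [k|].
  exact/s_periodic/mem_tnth.
apply/seteqP; split => [x /Ls xs|_ [k _ [j _ <-]]].
  have x_idx : (index x s < size s)%N by rewrite index_mem.
  exists (Ordinal x_idx) => //; exists 0%N => //=.
  by rewrite (tnth_nth x) /= nth_index.
exact/(attractor_iter pieces)/Ls/mem_tnth.
Qed.
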